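(* With $U_0,\Omega'_0,U'_0,y,\Upsilon_y,Z_y,S_2$ as in the context, let $Z'_y$ be the unique function on $\mathbb{K}^E$ with $dZ'_y=\cos\Upsilon_y\,dU'_0+\sin\Upsilon_y\star dU'_0$ and $Z'_y\to0$ at infinity. Then the one-form $$\mathbf{T}_2=-\frac{4}{\rho}S_2\star d(Z'_y+U'_0)$$ satisfies on $\mathbb{K}^E$ $$d(\rho\star\mathbf{T}_2)=8\sin\Upsilon_y\,e^{-2U_0-2Z_y}\,d\Omega'_0\wedge\star dU'_0,$$ equivalently $\nabla_aT_2^a=\frac{8}{\sqrt{\rho^2+(z-y)^2}}e^{-2U_0-2Z_y}(d\Omega'_0,dU'_0)_\gamma$ off the axis.
   Context: Let $\mathbb{E}^3$ have cylindrical coordinates $(\rho,z,\phi)$ and flat metric $\gamma=d\rho^2+dz^2+\rho^2d\phi^2$, with covariant derivative $\nabla$. Let $\Sigma_0$ be a $C^1$ axially symmetric surface diffeomorphic to a 2-sphere, given by $\{\rho=\rho_0(\mu),z=z_0(\mu),\phi=\varphi\}$, $\mu\in[\mu_S,\mu_N]$, with $\mu_S<\mu_N$ the only zeros of $\rho_0$ and $z_S:=z_0(\mu_S)<z_N:=z_0(\mu_N)$; $D_0$ is its unbounded exterior region. A function $f$ on $D_0$ is regular if it is $C^2$ on $D_0$, has a $C^1$ extension to $D_0\cup\Sigma_0$, and $rf$ is bounded ($r=\sqrt{\rho^2+z^2}$). $\mathbb{K}=\{(\rho,z):\rho\ge0\}$ carries the metric $d\rho^2+dz^2$ and Hodge star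 with $\star d\rho=-dz$, $\star dz=d\rho$; axially symmetric functions and one-forms $T^\rho d\rho+T^zdz$ are identified with objects on $\mathbb{K}$; $\mathbb{K}^E$ is the projection of $D_0$. $U_0$ and $U'_0$ are axially symmetric regular flat-harmonic functions on $D_0$, and $\Omega'_0$ an axially symmetric regular solution of $\triangle_\gamma\Omega'_0-4(d\Omega'_0,dU_0)_\gamma=0$. For $y\in(z_S,z_N)$: $\cos\Upsilon_y=(z-y)/\sqrt{\rho^2+(z-y)^2}$, $\sin\Upsilon_y=\rho/\sqrt{\rho^2+(z-y)^2}$; $Z_y$ is the solution of $dZ_y=\cos\Upsilon_y\,dU_0+\sin\Upsilon_y\star dU_0$ vanishing at infinity; $S_2$ is the solution vanishing at infinity of $dS_2=e^{-2U_0-2Z_y}[(1-\cos\Upsilon_y)d\Omega'_0-\sin\Upsilon_y\star d\Omega'_0]$. *)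

From Stdlib Require Import Reals Lra.
From Coquelicot Require Import Coquelicot.
Open Scope R_scope.

Definition dist3 (x y z x' y' z' : R) : R :=
  sqrt ((x - x') ^ 2 + (y - y') ^ 2 + (z - z') ^ 2).

Definition cont_within (S : R -> R -> R -> Prop) (F : R -> R -> R -> R)
  (x y z : R) : Prop :=
  forall eps, 0 < eps -> exists del, 0 < del /\
    forall x' y' z', S x' y' z' -> dist3 x' y' z' x y z < del ->
      Rabs (F x' y' z' - F x y z) < eps.

Definition pd3 (i : nat) (F : R -> R -> R -> R) : R -> R -> R -> R :=
  fun x y z => match i with
  | O => Derive (fun t => F t y z) x
  | S O => Derive (fun t => F x t z) y
  | _ => Derive (fun t => F x y t) z
  end.

Definition ex_pd3 (i : nat) (F : R -> R -> R -> R) (x y z : R) : Prop :=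
  match i with
  | O => ex_derive (fun t => F t y z) x
  | S O => ex_derive (fun t => F x t z) y
  | _ => ex_derive (fun t => F x y t) z
  end.

Definition C2_on (D : R -> R -> R -> Prop) (F : R -> R -> R -> R) : Prop :=
  forall x y z, D x y z ->
    cont_within D F x y z /\
    forall i j, (i < 3)%nat -> (j < 3)%nat ->
      ex_pd3 i F x y z /\ cont_within D (pd3 i F) x y z /\
      ex_pd3 j (pd3 i F) x y z /\ cont_within D (pd3 j (pd3 i F)) x y z.

(* F (with its first partials) has a C^1 extension to D ∪ Σ *)
Definition C1_ext (D Sg : R -> R -> R -> Prop) (F : R -> R -> R -> R) : Prop :=
  exists G : nat -> R -> R -> R -> R,
    (forall x y z, D x y z ->
       G 3%nat x y z = F x y z /\
       forall i, (i < 3)%nat -> G i x y z = pd3 i F x y z) /\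
    (forall x y z, (D x y z \/ Sg x y z) ->
       forall i, (i <= 3)%nat ->
         cont_within (fun a b c => D a b c \/ Sg a b c) (G i) x y z).

Definition r3 (x y z : R) : R := sqrt (x ^ 2 + y ^ 2 + z ^ 2).

Definition regular3 (D Sg : R -> R -> R -> Prop) (F : R -> R -> R -> R) : Prop :=
  C2_on D F /\ C1_ext D Sg F /\
  exists M, forall x y z, D x y z -> r3 x y z * Rabs (F x y z) <= M.

Definition lap3 (F : R -> R -> R -> R) : R -> R -> R -> R :=
  fun x y z => pd3 0 (pd3 0 F) x y z + pd3 1 (pd3 1 F) x y z + pd3 2 (pd3 2 F) x y z.

Definition gdot3 (F G : R -> R -> R -> R) : R -> R -> R -> R :=
  fun x y z => pd3 0 F x y z * pd3 0 G x y z + pd3 1 F x y z * pd3 1 G x y z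
             + pd3 2 F x y z * pd3 2 G x y z.

(* axially symmetric function on E^3 determined by its values on K *)
Definition lift (f : R -> R -> R) : R -> R -> R -> R :=
  fun x y z => f (sqrt (x ^ 2 + y ^ 2)) z.

Definition Sigma0 (rho0 z0 : R -> R) (muS muN : R) (x y z : R) : Prop :=
  exists mu phi, muS <= mu <= muN /\
    x = rho0 mu * cos phi /\ y = rho0 mu * sin phi /\ z = z0 mu.

(* C^1 profile curve of an embedded axially symmetric sphere *)
Definition sphere_profile (rho0 z0 : R -> R) (muS muN : R) : Prop :=
  muS < muN /\ rho0 muS = 0 /\ rho0 muN = 0 /\
  (forall mu, muS < mu < muN -> 0 < rho0 mu) /\
  z0 muS < z0 muN /\
  (forall mu, muS <= mu <= muN ->
     ex_derive rho0 mu /\ ex_derive z0 mu /\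
     continuity_pt (Derive rho0) mu /\ continuity_pt (Derive z0) mu /\
     (Derive rho0 mu <> 0 \/ Derive z0 mu <> 0)) /\
  (forall mu mu', muS <= mu <= muN -> muS <= mu' <= muN ->
     rho0 mu = rho0 mu' -> z0 mu = z0 mu' -> mu = mu').

(* unbounded connected component of the complement of Sg: the points that
   can be joined, avoiding Sg, to points arbitrarily far away *)
Definition exterior (Sg : R -> R -> R -> Prop) (x y z : R) : Prop :=
  ~ Sg x y z /\
  forall M, exists gx gy gz : R -> R,
    (forall t, 0 <= t <= 1 ->
       continuity_pt gx t /\ continuity_pt gy t /\ continuity_pt gz t /\
       ~ Sg (gx t) (gy t) (gz t)) /\
    gx 0 = x /\ gy 0 = y /\ gz 0 = z /\
    M < r3 (gx 1) (gy 1) (gz 1).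

(* K^E : projection of D onto K = {(rho,z) | rho >= 0} *)
Definition projK (D : R -> R -> R -> Prop) (rho z : R) : Prop :=
  exists x y, D x y z /\ rho = sqrt (x ^ 2 + y ^ 2).

(* one-form a drho + b dz *)
Definition form1 := ((R -> R -> R) * (R -> R -> R))%type.

Definition dK0 (f : R -> R -> R) : form1 :=
  (fun r z => Derive (fun t => f t z) r, fun r z => Derive (fun t => f r t) z).

(* Hodge star: *drho = -dz, *dz = drho *)
Definition star (w : form1) : form1 := (snd w, fun r z => - fst w r z).

Definition fscale (g : R -> R -> R) (w : form1) : form1 :=
  (fun r z => g r z * fst w r z, fun r z => g r z * snd w r z).

Definition fadd (w v : form1) : form1 :=
  (fun r z => fst w r z + fst v r z, fun r z => snd w r z + snd v r z).

(* two-forms are identified with their coefficient on drho /\ dz *)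
Definition dK1 (w : form1) : R -> R -> R :=
  fun r z => Derive (fun t => snd w t z) r - Derive (fun t => fst w r t) z.

Definition wedge (w v : form1) : R -> R -> R :=
  fun r z => fst w r z * snd v r z - snd w r z * fst v r z.

Definition cosU (y : R) : R -> R -> R :=
  fun r z => (z - y) / sqrt (r ^ 2 + (z - y) ^ 2).
Definition sinU (y : R) : R -> R -> R :=
  fun r z => r / sqrt (r ^ 2 + (z - y) ^ 2).

Definition solves_d (KE : R -> R -> Prop) (f : R -> R -> R) (w : form1) : Prop :=
  forall r z, KE r z -> 0 < r ->
    ex_derive (fun t => f t z) r /\ ex_derive (fun t => f r t) z /\
    Derive (fun t => f t z) r = fst w r z /\ Derive (fun t => f r t) z = snd w r z.

Definition vanishes_at_infinity (KE : R -> R -> Prop) (f : R -> R -> R) : Prop :=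
  forall eps, 0 < eps -> exists M, forall r z, KE r z ->
    M < sqrt (r ^ 2 + z ^ 2) -> Rabs (f r z) < eps.

(* Off the axis, [rho *T2 = 4 S2 d(Z'_y + U'_0) = 4 S2 W] with
   [W = (1 + cos Y) dU'_0 + sin Y *dU'_0].  The form [W] is closed: its exterior derivative is
   [d cos Y /\ dU'_0 + d sin Y /\ *dU'_0 + sin Y d*dU'_0], and [d*dU'_0 = U'_0,rho / rho] by the
   Laplace equation in cylindrical coordinates, which cancels the first two terms.  Hence
   [d(rho *T2) = 4 dS2 /\ W]; inserting [dS2 = e^(-2U_0-2Z_y) ((1 - cos Y) dOmega'_0 - sin Y *dOmega'_0)],
   the rules [*a /\ *b = a /\ b], [*a /\ b = - a /\ *b] and [cos^2 Y + sin^2 Y = 1] reduce the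
   wedge to [2 sin Y dOmega'_0 /\ *dU'_0].  All of this is local; the only global input is that the
   exterior [D_0] is open and invariant under rotations about the axis, so that a whole
   neighbourhood of [(rho, z)] lies in [K^E]. *)

From Pilot Require Import Defs.
From Stdlib Require Import Reals Lra Psatz.
From Coquelicot Require Import Coquelicot.
Open Scope R_scope.

Lemma rotate_norm2 x y a :
  (x * cos a - y * sin a) ^ 2 + (x * sin a + y * cos a) ^ 2 = x ^ 2 + y ^ 2.
Proof.
  pose proof (sin2_cos2 a) as E; unfold Rsqr in E.
  transitivity ((x ^ 2 + y ^ 2) * (sin a * sin a + cos a * cos a)); [ring|].
  rewrite E; ring.
Qed.

Lemma polar_coordinates x y rh : 0 < rh -> rh = sqrt (x ^ 2 + y ^ 2) ->
  exists th, x = rh * cos th /\ y = rh * sin th.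
Proof.
  intros Hr Hrh.
  assert (H2 : rh ^ 2 = x ^ 2 + y ^ 2) by (rewrite Hrh, pow2_sqrt; nra).
  set (u := x / rh).
  assert (Hu : -1 <= u <= 1).
  { unfold u; split; apply Rmult_le_reg_r with rh; auto;
      field_simplify; try lra; nra. }
  assert (Hs : sqrt (1 - u²) = Rabs y / rh).
  { replace (1 - u²) with ((Rabs y / rh) ^ 2).
    - rewrite sqrt_pow2; auto. apply Rdiv_le_0_compat; [apply Rabs_pos|lra].
    - assert (Ha : Rabs y ^ 2 = rh ^ 2 - x ^ 2) by (rewrite pow2_abs; lra).
      unfold u, Rsqr, Rdiv. rewrite Rpow_mult_distr, Ha. field. lra. }
  destruct (Rle_or_lt 0 y) as [Hy|Hy].
  - exists (acos u). rewrite cos_acos, sin_acos, Hs, Rabs_pos_eq by auto.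
    unfold u; split; field; lra.
  - exists (- acos u). rewrite cos_neg, sin_neg, cos_acos, sin_acos, Hs, Rabs_left by auto.
    unfold u; split; field; lra.
Qed.

Lemma norm2_diff_le a b c d :
  Rabs (sqrt (a ^ 2 + b ^ 2) - sqrt (c ^ 2 + d ^ 2)) <= sqrt ((a - c) ^ 2 + (b - d) ^ 2).
Proof.
  set (A := sqrt (a ^ 2 + b ^ 2)); set (C := sqrt (c ^ 2 + d ^ 2));
    set (E := sqrt ((a - c) ^ 2 + (b - d) ^ 2)).
  assert (HA : A ^ 2 = a ^ 2 + b ^ 2) by (apply pow2_sqrt; nra).
  assert (HC : C ^ 2 = c ^ 2 + d ^ 2) by (apply pow2_sqrt; nra).
  assert (HE : E ^ 2 = (a - c) ^ 2 + (b - d) ^ 2)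
    by (apply pow2_sqrt; pose proof (pow2_ge_0 (a - c)); pose proof (pow2_ge_0 (b - d)); lra).
  assert (A0 : 0 <= A) by apply sqrt_pos.
  assert (C0 : 0 <= C) by apply sqrt_pos.
  assert (E0 : 0 <= E) by apply sqrt_pos.
  assert (Cauchy_Schwarz : a * c + b * d <= A * C).
  { assert ((a * c + b * d) ^ 2 <= (A * C) ^ 2)
      by (rewrite Rpow_mult_distr, HA, HC; pose proof (pow2_ge_0 (a * d - b * c)); nra).
    assert (0 <= A * C) by nra. nra. }
  assert ((A - C) ^ 2 <= E ^ 2) by nra.
  apply Rabs_le; split; nra.
Qed.

Lemma dist3_ge_norm2 qx qy qz px py pz :
  Rabs (sqrt (qx ^ 2 + qy ^ 2) - sqrt (px ^ 2 + py ^ 2)) <= dist3 qx qy qz px py pz.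
Proof.
  eapply Rle_trans; [apply norm2_diff_le|].
  apply sqrt_le_1_alt. pose proof (pow2_ge_0 (qz - pz)); lra.
Qed.

Lemma dist3_ge_z qx qy qz px py pz : Rabs (qz - pz) <= dist3 qx qy qz px py pz.
Proof.
  rewrite <- (sqrt_pow2 (Rabs (qz - pz))), pow2_abs by apply Rabs_pos.
  apply sqrt_le_1_alt. pose proof (pow2_ge_0 (qx - px)); pose proof (pow2_ge_0 (qy - py)); lra.
Qed.

Lemma dist3_le_sum x y z x' y' z' :
  dist3 x y z x' y' z' <= Rabs (x - x') + Rabs (y - y') + Rabs (z - z').
Proof.
  pose proof (Rabs_pos (x - x')); pose proof (Rabs_pos (y - y')); pose proof (Rabs_pos (z - z')).
  unfold dist3. rewrite <- (sqrt_pow2 (Rabs (x - x') + Rabs (y - y') + Rabs (z - z'))) by lra.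
  apply sqrt_le_1_alt. rewrite <- (pow2_abs (x - x')), <- (pow2_abs (y - y')), <- (pow2_abs (z - z')).
  nra.
Qed.

Lemma dist3_segment s qx qy qz px py pz : 0 <= s <= 1 ->
  dist3 (qx + s * (px - qx)) (qy + s * (py - qy)) (qz + s * (pz - qz)) px py pz
  <= dist3 qx qy qz px py pz.
Proof.
  intros Hs. apply sqrt_le_1_alt.
  replace (qx + s * (px - qx) - px) with ((1 - s) * (qx - px)) by ring.
  replace (qy + s * (py - qy) - py) with ((1 - s) * (qy - py)) by ring.
  replace (qz + s * (pz - qz) - pz) with ((1 - s) * (qz - pz)) by ring.
  rewrite !Rpow_mult_distr.
  assert (0 <= (1 - s) ^ 2 <= 1) by (split; nra).
  pose proof (pow2_ge_0 (qx - px)); pose proof (pow2_ge_0 (qy - py)); pose proof (pow2_ge_0 (qz - pz)).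
  nra.
Qed.

Section Sphere.

Variables (rho0 z0 : R -> R) (muS muN : R).
Hypothesis profile : sphere_profile rho0 z0 muS muN.

Lemma profile_rho0_ge0 mu : muS <= mu <= muN -> 0 <= rho0 mu.
Proof.
  destruct profile as [_ [HS [HN [Hpos _]]]]; intros Hm.
  destruct (Req_dec mu muS) as [->|?]; [lra|].
  destruct (Req_dec mu muN) as [->|?]; [lra|].
  left; apply Hpos; lra.
Qed.

Lemma Sigma0P x y z : Sigma0 rho0 z0 muS muN x y z <->
  exists mu, muS <= mu <= muN /\ rho0 mu = sqrt (x ^ 2 + y ^ 2) /\ z0 mu = z.
Proof.
  split.
  - intros [mu [phi [Hm [-> [-> ->]]]]]. exists mu; split; [exact Hm|split; [|reflexivity]].
    pose proof (rotate_norm2 (rho0 mu) 0 phi) as E.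
    replace (rho0 mu * cos phi - 0 * sin phi) with (rho0 mu * cos phi) in E by ring.
    replace (rho0 mu * sin phi + 0 * cos phi) with (rho0 mu * sin phi) in E by ring.
    rewrite E, pow_i, Rplus_0_r, sqrt_pow2 by (try apply profile_rho0_ge0; auto; lia).
    reflexivity.
  - intros [mu [Hm [Hr Hz]]].
    destruct (profile_rho0_ge0 mu Hm) as [Hp|H0].
    + destruct (polar_coordinates x y (rho0 mu) Hp Hr) as [th [Hx Hy]].
      exists mu, th; auto.
    + assert (x ^ 2 + y ^ 2 = 0) by (rewrite <- H0 in Hr; apply sqrt_eq_0; nra).
      exists mu, 0. rewrite <- H0. repeat split; auto; nra.
Qed.

Lemma Sigma0_compl_open px py pz : ~ Sigma0 rho0 z0 muS muN px py pz ->
  exists del, 0 < del /\ forall qx qy qz, dist3 qx qy qz px py pz < del ->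
    ~ Sigma0 rho0 z0 muS muN qx qy qz.
Proof.
  intros Hp.
  set (gap := fun mu => Rabs (rho0 mu - sqrt (px ^ 2 + py ^ 2)) + Rabs (z0 mu - pz)).
  assert (Hcont : forall mu, muS <= mu <= muN -> continuity_pt gap mu).
  { intros mu Hm. destruct profile as [_ [_ [_ [_ [_ [Hd _]]]]]].
    destruct (Hd mu Hm) as [Hr [Hz _]].
    apply continuity_pt_filterlim, @continuous_plus; apply continuous_Rabs_comp;
      apply @continuous_plus; try apply continuous_const; apply ex_derive_continuous; auto. }
  assert (Hle : muS <= muN) by (destruct profile; lra).
  destruct (continuity_ab_min gap muS muN Hle Hcont) as [mx [Hmin Hmx]].
  assert (Hgap : 0 < gap mx).
  { pose proof (Rabs_pos (rho0 mx - sqrt (px ^ 2 + py ^ 2))); pose proof (Rabs_pos (z0 mx - pz)).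
    destruct (Req_dec (gap mx) 0) as [Hz0|Hnz0]; [|unfold gap in *; lra].
    exfalso; apply Hp, Sigma0P. exists mx; split; [exact Hmx|].
    unfold gap in Hz0. split; apply Rminus_diag_uniq, Rabs_eq_0; lra. }
  exists (gap mx / 2); split; [lra|].
  intros qx qy qz Hd Hq. apply Sigma0P in Hq as [mu [Hm [Hr Hz]]].
  specialize (Hmin mu Hm). unfold gap in Hmin at 2. rewrite Hr, Hz in Hmin.
  pose proof (dist3_ge_norm2 qx qy qz px py pz); pose proof (dist3_ge_z qx qy qz px py pz).
  lra.
Qed.

End Sphere.

Lemma Sigma0_rotate rho0 z0 muS muN a x y z :
  Sigma0 rho0 z0 muS muN x y z ->
  Sigma0 rho0 z0 muS muN (x * cos a - y * sin a) (x * sin a + y * cos a) z.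
Proof.
  intros [mu [phi [Hm [-> [-> ->]]]]]. exists mu, (phi + a).
  rewrite cos_plus, sin_plus. split; [exact Hm|repeat split; ring].
Qed.

Lemma rotate_continuity gx gy a t : continuity_pt gx t -> continuity_pt gy t ->
  continuity_pt (fun s => gx s * cos a - gy s * sin a) t /\
  continuity_pt (fun s => gx s * sin a + gy s * cos a) t.
Proof.
  rewrite !continuity_pt_filterlim; intros Hx Hy; split.
  - apply (continuous_plus (fun s => gx s * cos a) (fun s => - (gy s * sin a))).
    + apply (continuous_mult gx (fun _ => cos a)); auto using continuous_const.
    + apply (continuous_opp (fun s => gy s * sin a)).
      apply (continuous_mult gy (fun _ => sin a)); auto using continuous_const.
  - apply (continuous_plus (fun s => gx s * sin a) (fun s => gy s * cos a)).
    + apply (continuous_mult gx (fun _ => sin a)); auto using continuous_const.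
    + apply (continuous_mult gy (fun _ => cos a)); auto using continuous_const.
Qed.

Definition ramp (t : R) : R := (2 * t - 1 + Rabs (2 * t - 1)) / 2.

Lemma ramp_low t : t <= 1 / 2 -> ramp t = 0.
Proof. intros H. unfold ramp. rewrite Rabs_left1 by lra. field. Qed.

Lemma ramp_high t : 1 / 2 <= t -> ramp t = 2 * t - 1.
Proof. intros H. unfold ramp. rewrite Rabs_pos_eq by lra. field. Qed.

Lemma ramp_continuous t : continuous ramp t.
Proof.
  assert (Hlin : continuous (fun s => 2 * s - 1) t).
  { apply (continuous_plus (fun s => 2 * s) (fun _ => - 1)); [|apply continuous_const].
    apply (continuous_mult (fun _ => 2) (fun s => s)); [apply continuous_const|apply continuous_id]. }
  apply (continuous_mult (fun s => 2 * s - 1 + Rabs (2 * s - 1)) (fun _ => / 2));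
    [|apply continuous_const].
  apply (continuous_plus (fun s => 2 * s - 1) (fun s => Rabs (2 * s - 1))); auto.
  apply continuous_Rabs_comp; auto.
Qed.

Definition concat_path (q : R) (g : R -> R) (t : R) : R :=
  q + (2 * t - ramp t) * (g 0 - q) + (g (ramp t) - g 0).

Lemma concat_path_low q g t : t <= 1 / 2 -> concat_path q g t = q + 2 * t * (g 0 - q).
Proof. intros Ht. unfold concat_path. rewrite ramp_low by exact Ht. ring. Qed.

Lemma concat_path_high q g t : 1 / 2 <= t -> concat_path q g t = g (2 * t - 1).
Proof. intros Ht. unfold concat_path. rewrite ramp_high by exact Ht. ring. Qed.

Lemma concat_path_continuity q g t : 0 <= t <= 1 ->
  (forall s, 0 <= s <= 1 -> continuity_pt g s) -> continuity_pt (concat_path q g) t.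
Proof.
  intros Ht Hg. apply continuity_pt_filterlim. unfold concat_path.
  assert (Hlin : continuous (fun s => 2 * s) t).
  { apply (continuous_mult (fun _ => 2) (fun s => s)); [apply continuous_const|apply continuous_id]. }
  apply (continuous_plus (fun s => q + (2 * s - ramp s) * (g 0 - q)) (fun s => g (ramp s) - g 0)).
  - apply (continuous_plus (fun _ => q) (fun s => (2 * s - ramp s) * (g 0 - q)));
      [apply continuous_const|].
    apply (continuous_mult (fun s => 2 * s - ramp s) (fun _ => g 0 - q)); [|apply continuous_const].
    apply (continuous_plus (fun s => 2 * s) (fun s => - ramp s)); auto.
    apply (continuous_opp ramp), ramp_continuous.
  - apply (continuous_plus (fun s => g (ramp s)) (fun _ => - g 0)); [|apply continuous_const].
    apply (continuous_comp ramp g); [apply ramp_continuous|].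
    apply continuity_pt_filterlim, Hg.
    destruct (Rle_or_lt t (1 / 2)); [rewrite ramp_low|rewrite ramp_high]; lra.
Qed.

Lemma rotate_back x y a :
  (x * cos a - y * sin a) * cos (- a) - (x * sin a + y * cos a) * sin (- a) = x /\
  (x * cos a - y * sin a) * sin (- a) + (x * sin a + y * cos a) * cos (- a) = y.
Proof.
  rewrite cos_neg, sin_neg. pose proof (sin2_cos2 a) as E; unfold Rsqr in E.
  split; [transitivity (x * (sin a * sin a + cos a * cos a))|
          transitivity (y * (sin a * sin a + cos a * cos a))]; try ring; rewrite E; ring.
Qed.

Section Exterior.

Variable Sg : R -> R -> R -> Prop.

Lemma exterior_rotate
  (Sg_rotate : forall a x y z, Sg x y z -> Sg (x * cos a - y * sin a) (x * sin a + y * cos a) z)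
  a x y z :
  exterior Sg x y z -> exterior Sg (x * cos a - y * sin a) (x * sin a + y * cos a) z.
Proof.
  assert (compl_rotate : forall x y z, ~ Sg x y z ->
    ~ Sg (x * cos a - y * sin a) (x * sin a + y * cos a) z).
  { intros x' y' z' Hn Hs; apply Hn.
    destruct (rotate_back x' y' a) as [Ex Ey].
    apply (Sg_rotate (- a)) in Hs. rewrite Ex, Ey in Hs. exact Hs. }
  intros [Hp Hpath]; split; [auto|].
  intros M. destruct (Hpath M) as [gx [gy [gz [Hg [Hx0 [Hy0 [Hz0 HM]]]]]]].
  exists (fun t => gx t * cos a - gy t * sin a), (fun t => gx t * sin a + gy t * cos a), gz.
  split; [|repeat split].
  - intros t Ht. destruct (Hg t Ht) as [Cx [Cy [Cz Hn]]].
    destruct (rotate_continuity gx gy a t Cx Cy). auto.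
  - rewrite Hx0, Hy0; reflexivity.
  - rewrite Hx0, Hy0; reflexivity.
  - exact Hz0.
  - unfold r3 in *. rewrite rotate_norm2; exact HM.
Qed.

Lemma exterior_open
  (compl_open : forall px py pz, ~ Sg px py pz -> exists del, 0 < del /\
     forall qx qy qz, dist3 qx qy qz px py pz < del -> ~ Sg qx qy qz)
  px py pz :
  exterior Sg px py pz ->
  exists del, 0 < del /\ forall qx qy qz, dist3 qx qy qz px py pz < del -> exterior Sg qx qy qz.
Proof.
  intros [Hp Hpath].
  destruct (compl_open _ _ _ Hp) as [del [Hdel Hball]].
  exists del; split; auto. intros qx qy qz Hq; split; [auto|].
  intros M. destruct (Hpath M) as [gx [gy [gz [Hg [Hx0 [Hy0 [Hz0 HM]]]]]]].
  exists (concat_path qx gx), (concat_path qy gy), (concat_path qz gz).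
  assert (Hg' : forall s, 0 <= s <= 1 ->
    continuity_pt gx s /\ continuity_pt gy s /\ continuity_pt gz s)
    by (intros s Hs; destruct (Hg s Hs) as [? [? [? _]]]; auto).
  split; [intros t Ht; repeat split|repeat split].
  - apply concat_path_continuity; auto. intros s Hs; apply Hg'; auto.
  - apply concat_path_continuity; auto. intros s Hs; apply Hg'; auto.
  - apply concat_path_continuity; auto. intros s Hs; apply Hg'; auto.
  - destruct (Rle_or_lt t (1 / 2)) as [Hl|Hl].
    + rewrite !concat_path_low, Hx0, Hy0, Hz0 by lra.
      apply Hball. eapply Rle_lt_trans; [apply dist3_segment; lra|exact Hq].
    + rewrite !concat_path_high by lra. apply Hg; lra.
  - rewrite concat_path_low by lra. ring.
  - rewrite concat_path_low by lra. ring.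
  - rewrite concat_path_low by lra. ring.
  - rewrite !concat_path_high by lra. replace (2 * 1 - 1) with 1 by ring. exact HM.
Qed.

End Exterior.

Lemma sqrt_sq_plus_0 a : 0 <= a -> sqrt (a ^ 2 + 0 ^ 2) = a.
Proof. intros Ha. rewrite pow_i, Rplus_0_r by lia. apply sqrt_pow2, Ha. Qed.

Lemma projK_of_axis (D : R -> R -> R -> Prop) a b : D a 0 b -> 0 <= a -> projK D a b.
Proof. intros HD Ha. exists a, 0. rewrite sqrt_sq_plus_0; auto. Qed.

Lemma projK_exterior_Sigma0 rho0 z0 muS muN r z :
  projK (exterior (Sigma0 rho0 z0 muS muN)) r z -> 0 < r ->
  exterior (Sigma0 rho0 z0 muS muN) r 0 z.
Proof.
  intros [x [y [Hxyz Hr]]] Hr0.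
  destruct (polar_coordinates x y r Hr0 Hr) as [th [-> ->]].
  apply (exterior_rotate _ (Sigma0_rotate rho0 z0 muS muN) (- th)) in Hxyz.
  destruct (rotate_back r 0 th) as [Ex Ey].
  rewrite !Rmult_0_l, Rminus_0_r, Rplus_0_r in Ex, Ey. rewrite Ex, Ey in Hxyz.
  exact Hxyz.
Qed.

Lemma exterior_Sigma0_near_axis rho0 z0 muS muN r z :
  sphere_profile rho0 z0 muS muN ->
  projK (exterior (Sigma0 rho0 z0 muS muN)) r z -> 0 < r ->
  locally_2d (fun a b => exterior (Sigma0 rho0 z0 muS muN) a 0 b /\ 0 < a) r z.
Proof.
  intros profile HK Hr.
  destruct (exterior_open _ (Sigma0_compl_open _ _ _ _ profile) r 0 z
              (projK_exterior_Sigma0 _ _ _ _ r z HK Hr)) as [del [Hdel Hball]].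
  assert (Hdel2 : 0 < del / 2) by lra.
  exists (mkposreal (Rmin (del / 2) r) (Rmin_pos _ _ Hdel2 Hr)); simpl.
  intros a b Ha Hb. pose proof (Rmin_l (del / 2) r); pose proof (Rmin_r (del / 2) r).
  split.
  - apply Hball. eapply Rle_lt_trans; [apply dist3_le_sum|].
    rewrite Rminus_0_r, Rabs_R0. lra.
  - apply Rabs_def2 in Ha. lra.
Qed.

Definition d_rho (U : R -> R -> R) (a b : R) : R := Derive (fun t => U t b) a.
Definition d_z (U : R -> R -> R) (a b : R) : R := Derive (fun t => U a t) b.

Definition diff2_at (U : R -> R -> R) (a b : R) : Prop :=
  ex_derive (fun t => U t b) a /\ ex_derive (fun t => U a t) b /\
  ex_derive (fun t => d_rho U t b) a /\ ex_derive (fun t => d_z U t b) a /\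
  ex_derive (fun t => d_rho U a t) b /\ ex_derive (fun t => d_z U a t) b.

Section Axis.

Variables (F : R -> R -> R -> R) (G : R -> R -> R).
Hypothesis F_axis : forall a s, 0 < a -> F a 0 s = G a s.

Lemma F_axis_near t s : 0 < t -> locally t (fun a => F a 0 s = G a s).
Proof.
  intros Ht. exists (mkposreal t Ht). intros a Ha.
  apply F_axis. change (Rabs (a - t) < t) in Ha. apply Rabs_def2 in Ha. lra.
Qed.

Lemma pd3_0_axis t s : 0 < t -> pd3 0 F t 0 s = d_rho G t s.
Proof. intros Ht. apply Derive_ext_loc, F_axis_near, Ht. Qed.

Lemma pd3_2_axis t s : 0 < t -> pd3 2 F t 0 s = d_z G t s.
Proof. intros Ht. apply Derive_ext. intros c. apply F_axis, Ht. Qed.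

Lemma ex_pd3_0_axis t s : 0 < t -> ex_pd3 0 F t 0 s -> ex_derive (fun a => G a s) t.
Proof. intros Ht. apply ex_derive_ext_loc, F_axis_near, Ht. Qed.

Lemma ex_pd3_2_axis t s : 0 < t -> ex_pd3 2 F t 0 s -> ex_derive (fun c => G t c) s.
Proof. intros Ht. apply ex_derive_ext. intros c. apply F_axis, Ht. Qed.

End Axis.

Lemma lift_axis U a s : 0 < a -> lift U a 0 s = U a s.
Proof. intros Ha. apply (f_equal (fun t => U t s)), sqrt_sq_plus_0. lra. Qed.

Lemma pd3_0_lift_axis U a s : 0 < a -> pd3 0 (lift U) a 0 s = d_rho U a s.
Proof. apply pd3_0_axis, lift_axis. Qed.

Lemma pd3_2_lift_axis U a s : 0 < a -> pd3 2 (lift U) a 0 s = d_z U a s.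
Proof. apply pd3_2_axis, lift_axis. Qed.

Lemma C2_on_lift_axis (D : R -> R -> R -> Prop) U t s :
  C2_on D (lift U) -> D t 0 s -> 0 < t -> diff2_at U t s.
Proof.
  intros HC HD Ht. destruct (HC t 0 s HD) as [_ HC2].
  destruct (HC2 0%nat 0%nat ltac:(lia) ltac:(lia)) as [E0 [_ [E00 _]]].
  destruct (HC2 2%nat 0%nat ltac:(lia) ltac:(lia)) as [E2 [_ [E02 _]]].
  destruct (HC2 0%nat 2%nat ltac:(lia) ltac:(lia)) as [_ [_ [E20 _]]].
  destruct (HC2 2%nat 2%nat ltac:(lia) ltac:(lia)) as [_ [_ [E22 _]]].
  repeat split.
  - exact (ex_pd3_0_axis _ _ (lift_axis U) t s Ht E0).
  - exact (ex_pd3_2_axis _ _ (lift_axis U) t s Ht E2).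
  - exact (ex_pd3_0_axis _ _ (pd3_0_lift_axis U) t s Ht E00).
  - exact (ex_pd3_0_axis _ _ (pd3_2_lift_axis U) t s Ht E02).
  - exact (ex_pd3_2_axis _ _ (pd3_0_lift_axis U) t s Ht E20).
  - exact (ex_pd3_2_axis _ _ (pd3_2_lift_axis U) t s Ht E22).
Qed.

Lemma continuity_2d_pt_axis (D : R -> R -> R -> Prop) F r z :
  locally_2d (fun a b => D a 0 b) r z -> cont_within D F r 0 z ->
  continuity_2d_pt (fun a b => F a 0 b) r z.
Proof.
  intros [e He] HF eps. destruct (HF eps (cond_pos eps)) as [del [Hdel Hball]].
  assert (Hdel2 : 0 < del / 2) by lra.
  exists (mkposreal (Rmin e (del / 2)) (Rmin_pos _ _ (cond_pos e) Hdel2)); simpl.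
  intros a b Ha Hb. pose proof (Rmin_l e (del / 2)); pose proof (Rmin_r e (del / 2)).
  apply Hball; [apply He; lra|].
  eapply Rle_lt_trans; [apply dist3_le_sum|]. rewrite Rminus_0_r, Rabs_R0. lra.
Qed.

Lemma locally_2d_mono (P Q : R -> R -> Prop) x y :
  (forall a b, P a b -> Q a b) -> locally_2d P x y -> locally_2d Q x y.
Proof. intros HPQ. apply locally_2d_impl, locally_2d_forall, HPQ. Qed.

Lemma d_rho_d_z_comm (D : R -> R -> R -> Prop) U r z :
  C2_on D (lift U) -> locally_2d (fun a b => D a 0 b /\ 0 < a) r z ->
  Derive (fun a => d_z U a z) r = Derive (fun c => d_rho U r c) z.
Proof.
  intros HC Hnear.
  assert (HD : locally_2d (fun a b => D a 0 b) r z)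
    by (revert Hnear; apply locally_2d_mono; tauto).
  destruct (locally_2d_singleton _ _ _ Hnear) as [HD0 _].
  destruct (proj2 (HC r 0 z HD0) 2%nat 0%nat ltac:(lia) ltac:(lia)) as [_ [_ [_ C20]]].
  destruct (proj2 (HC r 0 z HD0) 0%nat 2%nat ltac:(lia) ltac:(lia)) as [_ [_ [_ C02]]].
  apply Schwarz.
  - revert Hnear; apply locally_2d_mono. intros a b [HDab Ha].
    destruct (C2_on_lift_axis D U a b HC HDab Ha) as [? [? [_ [? [? _]]]]]. auto.
  - eapply continuity_2d_pt_ext_loc; [|exact (continuity_2d_pt_axis _ _ _ _ HD C20)].
    revert Hnear; apply locally_2d_mono. intros a b [_ Ha].
    exact (pd3_0_axis _ _ (pd3_2_lift_axis U) a b Ha).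
  - eapply continuity_2d_pt_ext_loc; [|exact (continuity_2d_pt_axis _ _ _ _ HD C02)].
    revert Hnear; apply locally_2d_mono. intros a b [_ Ha].
    exact (pd3_2_axis _ _ (pd3_0_lift_axis U) a b Ha).
Qed.

Lemma sqrt_sq_plus_sq_bounds r b : 0 < r -> r <= sqrt (r ^ 2 + b ^ 2) <= r + Rabs b.
Proof.
  intros Hr. split.
  - rewrite <- (sqrt_pow2 r) at 1 by lra. apply sqrt_le_1_alt. pose proof (pow2_ge_0 b); lra.
  - rewrite <- (sqrt_pow2 (r + Rabs b)) by (pose proof (Rabs_pos b); lra).
    apply sqrt_le_1_alt. rewrite <- (pow2_abs b). pose proof (Rabs_pos b). nra.
Qed.

(* In the [y]-direction the lift is [b |-> U (sqrt (r^2 + b^2)) z]; its second derivative at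
   [b = 0] is [U_rho / rho], the extra term of the Laplacian in cylindrical coordinates. *)
Lemma pd3_1_1_lift_axis U r z : 0 < r ->
  locally r (fun a => ex_derive (fun t => U t z) a) -> ex_derive (fun a => d_rho U a z) r ->
  pd3 1 (pd3 1 (lift U)) r 0 z = d_rho U r z / r.
Proof.
  intros Hr [e He] Hex2.
  change (Derive (fun b => pd3 1 (lift U) r b z) 0 = d_rho U r z / r).
  rewrite (Derive_ext_loc _ (fun b => d_rho U (sqrt (r ^ 2 + b ^ 2)) z * (b / sqrt (r ^ 2 + b ^ 2)))).
  2:{ exists e. intros b Hb. change (Rabs (b - 0) < e) in Hb. rewrite Rminus_0_r in Hb.
      pose proof (sqrt_sq_plus_sq_bounds r b Hr).
      apply is_derive_unique. unfold lift. auto_derive.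
      - replace (r * (r * 1) + b * (b * 1)) with (r ^ 2 + b ^ 2) by ring.
        split; [apply He; change (Rabs (sqrt (r ^ 2 + b ^ 2) - r) < e); apply Rabs_def1; lra|].
        split; [nra|exact I].
      - replace (r * (r * 1) + b * (b * 1)) with (r ^ 2 + b ^ 2) by ring. unfold d_rho. field. lra. }
  apply is_derive_unique. auto_derive.
  - replace (r * (r * 1) + 0 * (0 * 1)) with (r ^ 2) by ring. rewrite sqrt_pow2 by lra.
    repeat split; auto; nra.
  - replace (r * (r * 1) + 0 * (0 * 1)) with (r ^ 2) by ring. rewrite sqrt_pow2 by lra.
    field. lra.
Qed.

Lemma lap3_lift_axis U r z : 0 < r ->
  locally r (fun a => ex_derive (fun t => U t z) a) -> ex_derive (fun a => d_rho U a z) r ->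
  lap3 (lift U) r 0 z
  = Derive (fun a => d_rho U a z) r + d_rho U r z / r + Derive (fun c => d_z U r c) z.
Proof.
  intros Hr Hex Hex2. unfold lap3.
  rewrite (pd3_0_axis _ _ (pd3_0_lift_axis U)), (pd3_2_axis _ _ (pd3_2_lift_axis U)),
    pd3_1_1_lift_axis by auto.
  reflexivity.
Qed.

(* [Derive_plus] is stated over [R_AbsRing]; rewriting with it leaves binders that [ring] does
   not identify with the [R]-typed ones. *)
Lemma Derive_plus_R (f g : R -> R) x : ex_derive f x -> ex_derive g x ->
  Derive (fun t => f t + g t) x = Derive f x + Derive g x.
Proof. apply Derive_plus. Qed.

Lemma dK1_ext_loc (w v : Defs.form1) r z :
  locally_2d (fun a b => fst w a b = fst v a b /\ snd w a b = snd v a b) r z ->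
  dK1 w r z = dK1 v r z.
Proof.
  intros H. unfold dK1.
  rewrite (Derive_ext_loc (fun t => snd w t z) (fun t => snd v t z)),
    (Derive_ext_loc (fun t => fst w r t) (fun t => fst v r t)); [reflexivity| |].
  - apply (locally_2d_1d_const_x (fun a b => fst w a b = fst v a b)).
    revert H; apply locally_2d_mono; tauto.
  - apply (locally_2d_1d_const_y (fun a b => snd w a b = snd v a b)).
    revert H; apply locally_2d_mono; tauto.
Qed.

Lemma dK1_fadd (w v : Defs.form1) r z :
  ex_derive (fun t => snd w t z) r -> ex_derive (fun t => snd v t z) r ->
  ex_derive (fun t => fst w r t) z -> ex_derive (fun t => fst v r t) z ->
  dK1 (fadd w v) r z = dK1 w r z + dK1 v r z.
Proof.
  intros Hw2 Hv2 Hw1 Hv1. unfold dK1, fadd; cbn [fst snd].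
  rewrite (Derive_plus_R (fun t => snd w t z) (fun t => snd v t z)),
    (Derive_plus_R (fun t => fst w r t) (fun t => fst v r t)) by assumption.
  ring.
Qed.

Lemma dK1_fscale f (w : Defs.form1) r z :
  ex_derive (fun t => f t z) r -> ex_derive (fun t => f r t) z ->
  ex_derive (fun t => snd w t z) r -> ex_derive (fun t => fst w r t) z ->
  dK1 (fscale f w) r z = wedge (dK0 f) w r z + f r z * dK1 w r z.
Proof.
  intros Hfr Hfz Hw2 Hw1. unfold dK1, fscale, wedge, dK0; cbn [fst snd].
  rewrite (Derive_mult (fun t => f t z) (fun t => snd w t z)),
    (Derive_mult (fun t => f r t) (fun t => fst w r t)) by assumption.
  ring.
Qed.

Lemma dK1_star (w : Defs.form1) r z :
  dK1 (star w) r z = - (Derive (fun t => fst w t z) r + Derive (fun t => snd w r t) z).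
Proof. unfold dK1, star; cbn [fst snd]. rewrite (Derive_opp (fun t => fst w t z)). ring. Qed.

Lemma wedge_dK0_scal k (S : R -> R -> R) (v : Defs.form1) r z :
  wedge (dK0 (fun a b => k * S a b)) v r z = k * wedge (dK0 S) v r z.
Proof.
  unfold wedge, dK0; cbn [fst snd].
  rewrite (Derive_scal (fun t => S t z) k r), (Derive_scal (fun t => S r t) k z). ring.
Qed.

Lemma wedge_solves_d (KE : R -> R -> Prop) f (w v : Defs.form1) r z :
  solves_d KE f w -> KE r z -> 0 < r -> wedge (dK0 f) v r z = wedge w v r z.
Proof.
  intros Hf HK Hr. destruct (Hf r z HK Hr) as [_ [_ [E1 E2]]].
  unfold wedge, dK0; cbn [fst snd]. rewrite E1, E2. reflexivity.
Qed.

Ltac solve_radial_derive r a :=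
  let H := fresh in let Hne := fresh in
  pose proof (sqrt_sq_plus_sq_bounds r a ltac:(assumption)) as H;
  assert (Hne : sqrt (r ^ 2 + a ^ 2) <> 0) by (apply Rgt_not_eq; lra);
  auto_derive;
  replace (r * (r * 1) + a * (a * 1)) with (r ^ 2 + a ^ 2) by ring;
  [split; [apply Rplus_lt_le_0_compat; [apply pow_lt|apply pow2_ge_0]; assumption
          |split; [exact Hne|exact I]]
  |field; exact Hne].

Section Angle.

Variables (y r z : R).
Hypothesis Hr : 0 < r.

Lemma is_derive_cosU_rho : is_derive (fun t => cosU y t z) r
  (- (z - y) * r / sqrt (r ^ 2 + (z - y) ^ 2) ^ 3).
Proof. unfold cosU, Rminus. solve_radial_derive r (z + - y). Qed.

Lemma is_derive_cosU_z : is_derive (fun t => cosU y r t) z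
  (1 / sqrt (r ^ 2 + (z - y) ^ 2) - (z - y) ^ 2 / sqrt (r ^ 2 + (z - y) ^ 2) ^ 3).
Proof. unfold cosU, Rminus. solve_radial_derive r (z + - y). Qed.

Lemma is_derive_sinU_rho : is_derive (fun t => sinU y t z) r
  (1 / sqrt (r ^ 2 + (z - y) ^ 2) - r ^ 2 / sqrt (r ^ 2 + (z - y) ^ 2) ^ 3).
Proof. unfold sinU, Rminus. solve_radial_derive r (z + - y). Qed.

Lemma is_derive_sinU_z : is_derive (fun t => sinU y r t) z
  (- r * (z - y) / sqrt (r ^ 2 + (z - y) ^ 2) ^ 3).
Proof. unfold sinU, Rminus. solve_radial_derive r (z + - y). Qed.

Lemma ex_derive_cosU_sinU :
  ex_derive (fun t => cosU y t z) r /\ ex_derive (fun t => cosU y r t) z /\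
  ex_derive (fun t => sinU y t z) r /\ ex_derive (fun t => sinU y r t) z.
Proof.
  repeat split; eexists;
    [apply is_derive_cosU_rho|apply is_derive_cosU_z|apply is_derive_sinU_rho|apply is_derive_sinU_z].
Qed.

Lemma cosU_sq_plus_sinU_sq : cosU y r z ^ 2 + sinU y r z ^ 2 = 1.
Proof.
  pose proof (sqrt_sq_plus_sq_bounds r (z - y) Hr).
  assert (HA : sqrt (r ^ 2 + (z - y) ^ 2) ^ 2 = r ^ 2 + (z - y) ^ 2)
    by (apply pow2_sqrt; pose proof (pow2_ge_0 (z - y)); nra).
  unfold cosU, sinU. field_simplify; [|lra]. rewrite HA. field. nra.
Qed.

End Angle.

(* [Zform y U] is the prescribed differential [cos Y_y dU + sin Y_y *dU] of [Z_y]. *)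
Definition Zform (y : R) (U : R -> R -> R) : Defs.form1 :=
  fadd (fscale (cosU y) (dK0 U)) (fscale (sinU y) (star (dK0 U))).

Lemma ex_derive_Zform_terms y U r z : 0 < r -> diff2_at U r z ->
  ex_derive (fun t => cosU y t z * d_z U t z) r /\
  ex_derive (fun t => sinU y t z * - d_rho U t z) r /\
  ex_derive (fun t => cosU y r t * d_rho U r t) z /\
  ex_derive (fun t => sinU y r t * d_z U r t) z.
Proof.
  intros Hr [_ [_ [HUrr [HUzr [HUrz HUzz]]]]].
  destruct (ex_derive_cosU_sinU y r z Hr) as [Ecr [Ecz [Esr Esz]]].
  repeat split.
  - exact (ex_derive_mult (fun t => cosU y t z) (fun t => d_z U t z) r Ecr HUzr).
  - exact (ex_derive_mult (fun t => sinU y t z) (fun t => - d_rho U t z) r Esr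
             (ex_derive_opp (fun t => d_rho U t z) r HUrr)).
  - exact (ex_derive_mult (fun t => cosU y r t) (fun t => d_rho U r t) z Ecz HUrz).
  - exact (ex_derive_mult (fun t => sinU y r t) (fun t => d_z U r t) z Esz HUzz).
Qed.

(* [dZ_y] is closed: this is the integrability condition behind the existence of [Z_y]. *)
Lemma Zform_closed y U r z : 0 < r -> diff2_at U r z ->
  Derive (fun a => d_z U a z) r = Derive (fun c => d_rho U r c) z ->
  Derive (fun a => d_rho U a z) r + d_rho U r z / r + Derive (fun c => d_z U r c) z = 0 ->
  dK1 (Zform y U) r z = 0.
Proof.
  intros Hr Hdiff Hsym Hlap.
  destruct (ex_derive_Zform_terms y U r z Hr Hdiff) as [T1 [T2 [T3 T4]]].
  destruct Hdiff as [_ [_ [HUrr [HUzr [HUrz HUzz]]]]].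
  destruct (ex_derive_cosU_sinU y r z Hr) as [Ecr [Ecz [Esr Esz]]].
  unfold Zform. rewrite dK1_fadd by assumption.
  rewrite (dK1_fscale (cosU y)), (dK1_fscale (sinU y)), dK1_star by
    (try exact (ex_derive_opp (fun t => d_rho U t z) r HUrr); assumption).
  change (dK1 (dK0 U) r z) with
    (Derive (fun a => d_z U a z) r - Derive (fun c => d_rho U r c) z).
  change (Derive (fun t => fst (dK0 U) t z) r) with (Derive (fun a => d_rho U a z) r).
  change (Derive (fun t => snd (dK0 U) r t) z) with (Derive (fun c => d_z U r c) z).
  replace (Derive (fun a => d_rho U a z) r)
    with (- (d_rho U r z / r) - Derive (fun c => d_z U r c) z) by lra.
  rewrite Hsym, Rminus_diag, Rmult_0_r, Rplus_0_r.
  unfold wedge; cbn [fst snd dK0 star].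
  rewrite (is_derive_unique (fun t : R => cosU y t z) _ _ (is_derive_cosU_rho y r z Hr)),
    (is_derive_unique (fun t : R => cosU y r t) _ _ (is_derive_cosU_z y r z Hr)),
    (is_derive_unique (fun t : R => sinU y t z) _ _ (is_derive_sinU_rho y r z Hr)),
    (is_derive_unique (fun t : R => sinU y r t) _ _ (is_derive_sinU_z y r z Hr)).
  change (Derive (fun t => U t z) r) with (d_rho U r z).
  change (Derive (fun t => U r t) z) with (d_z U r z).
  unfold sinU.
  pose proof (sqrt_sq_plus_sq_bounds r (z - y) Hr).
  assert (HA : sqrt (r ^ 2 + (z - y) ^ 2) ^ 2 = r ^ 2 + (z - y) ^ 2)
    by (apply pow2_sqrt; pose proof (pow2_ge_0 (z - y)); nra).
  set (A := sqrt (r ^ 2 + (z - y) ^ 2)) in *.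
  transitivity (d_rho U r z / A ^ 3 * (r ^ 2 + (z - y) ^ 2 - A ^ 2)).
  - field. lra.
  - rewrite HA. ring.
Qed.

Lemma wedge_dS2_dZ (c s e : R -> R -> R) (a b : Defs.form1) r z :
  c r z ^ 2 + s r z ^ 2 = 1 ->
  wedge (fscale e (fadd (fscale (fun r z => 1 - c r z) a) (fscale (fun r z => - s r z) (star a))))
        (fadd (fadd (fscale c b) (fscale s (star b))) b) r z
  = 2 * s r z * e r z * wedge a (star b) r z.
Proof.
  intros Hcs. unfold wedge, fscale, fadd, star; cbn [fst snd].
  transitivity (2 * s r z * e r z * (fst a r z * - fst b r z - snd a r z * snd b r z)
                + e r z * (snd a r z * fst b r z - fst a r z * snd b r z) * (c r z ^ 2 + s r z ^ 2 - 1)).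
  - ring.
  - rewrite Hcs. ring.
Qed.

Lemma rho_star_T2 (S Z U : R -> R -> R) (w : Defs.form1) a b : 0 < a ->
  ex_derive (fun t => Z t b) a -> ex_derive (fun t => Z a t) b ->
  ex_derive (fun t => U t b) a -> ex_derive (fun t => U a t) b ->
  fst (dK0 Z) a b = fst w a b -> snd (dK0 Z) a b = snd w a b ->
  let T := fscale (fun r z => - (4 / r) * S r z) (star (dK0 (fun r z => Z r z + U r z))) in
  let W := fscale (fun r z => 4 * S r z) (fadd w (dK0 U)) in
  fst (fscale (fun r _ => r) (star T)) a b = fst W a b /\
  snd (fscale (fun r _ => r) (star T)) a b = snd W a b.
Proof.
  intros Ha HZr HZz HUr HUz Hw1 Hw2 T W. unfold T, W, fscale, star, fadd, dK0 in *; cbn [fst snd] in *.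
  rewrite (Derive_plus_R (fun t => Z t b) (fun t => U t b)),
    (Derive_plus_R (fun t => Z a t) (fun t => U a t)), Hw1, Hw2 by assumption.
  split; field; lra.
Qed.

Section Harmonic.

Variables (D : R -> R -> R -> Prop) (U : R -> R -> R) (r z : R).
Hypothesis U_C2 : C2_on D (lift U).
Hypothesis U_harmonic : forall a b c, D a b c -> lap3 (lift U) a b c = 0.
Hypothesis near_axis : locally_2d (fun a b => D a 0 b /\ 0 < a) r z.

Lemma diff2_at_near : locally_2d (diff2_at U) r z.
Proof.
  generalize near_axis; apply locally_2d_mono. intros a b [HD Ha].
  exact (C2_on_lift_axis D U a b U_C2 HD Ha).
Qed.

Lemma cylindrical_laplace :
  Derive (fun a => d_rho U a z) r + d_rho U r z / r + Derive (fun c => d_z U r c) z = 0.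
Proof.
  destruct (locally_2d_singleton _ _ _ near_axis) as [HD Hr].
  rewrite <- (lap3_lift_axis U r z Hr); [exact (U_harmonic r 0 z HD)| |].
  - apply (locally_2d_1d_const_y (fun a b => ex_derive (fun t => U t b) a)).
    generalize diff2_at_near; apply locally_2d_mono. intros a b Hab; apply Hab.
  - apply (locally_2d_singleton _ _ _ diff2_at_near).
Qed.

Lemma ex_derive_dZ_plus_dU y :
  ex_derive (fun t => snd (fadd (Zform y U) (dK0 U)) t z) r /\
  ex_derive (fun t => fst (fadd (Zform y U) (dK0 U)) r t) z.
Proof.
  destruct (locally_2d_singleton _ _ _ near_axis) as [_ Hr].
  pose proof (locally_2d_singleton _ _ _ diff2_at_near) as Hdiff.
  destruct (ex_derive_Zform_terms y U r z Hr Hdiff) as [T1 [T2 [T3 T4]]].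
  destruct Hdiff as [_ [_ [_ [HUzr [HUrz _]]]]].
  split; apply (ex_derive_plus (fun t => _ + _) (fun t => _)); try assumption;
    apply (ex_derive_plus (fun t => _ * _) (fun t => _ * _)); assumption.
Qed.

Lemma dZ_plus_dU_closed y : dK1 (fadd (Zform y U) (dK0 U)) r z = 0.
Proof.
  destruct (locally_2d_singleton _ _ _ near_axis) as [_ Hr].
  pose proof (locally_2d_singleton _ _ _ diff2_at_near) as Hdiff.
  pose proof (d_rho_d_z_comm D U r z U_C2 near_axis) as Hsym.
  destruct (ex_derive_Zform_terms y U r z Hr Hdiff) as [T1 [T2 [T3 T4]]].
  pose proof Hdiff as [_ [_ [_ [HUzr [HUrz _]]]]].
  rewrite dK1_fadd, (Zform_closed y U r z Hr Hdiff Hsym cylindrical_laplace).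
  - change (dK1 (dK0 U) r z) with
      (Derive (fun a => d_z U a z) r - Derive (fun c => d_rho U r c) z).
    rewrite Hsym. ring.
  - apply (ex_derive_plus (fun t => _ * _) (fun t => _ * _)); assumption.
  - exact HUzr.
  - apply (ex_derive_plus (fun t => _ * _) (fun t => _ * _)); assumption.
  - exact HUrz.
Qed.

End Harmonic.

(* Only the equation of [U'_0] and the defining equations of [S_2] and [Z'_y] enter: the
   identity is local. *)
Theorem mainTheorem7
  (rho0 z0 : R -> R) (muS muN : R)
  (U0 U0' Om0' : R -> R -> R) (y : R) (Zy S2 Zy' : R -> R -> R) :
  sphere_profile rho0 z0 muS muN ->
  let Sg := Sigma0 rho0 z0 muS muN in
  let D0 := exterior Sg in
  let KE := projK D0 in
  regular3 D0 Sg (lift U0) ->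
  (forall a b c, D0 a b c -> lap3 (lift U0) a b c = 0) ->
  regular3 D0 Sg (lift U0') ->
  (forall a b c, D0 a b c -> lap3 (lift U0') a b c = 0) ->
  regular3 D0 Sg (lift Om0') ->
  (forall a b c, D0 a b c ->
     lap3 (lift Om0') a b c - 4 * gdot3 (lift Om0') (lift U0) a b c = 0) ->
  z0 muS < y < z0 muN ->
  solves_d KE Zy (fadd (fscale (cosU y) (dK0 U0)) (fscale (sinU y) (star (dK0 U0)))) ->
  vanishes_at_infinity KE Zy ->
  solves_d KE S2
    (fscale (fun r z => exp (-2 * U0 r z - 2 * Zy r z))
       (fadd (fscale (fun r z => 1 - cosU y r z) (dK0 Om0'))
             (fscale (fun r z => - sinU y r z) (star (dK0 Om0'))))) ->
  vanishes_at_infinity KE S2 ->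
  solves_d KE Zy' (fadd (fscale (cosU y) (dK0 U0')) (fscale (sinU y) (star (dK0 U0')))) ->
  vanishes_at_infinity KE Zy' ->
  let T2 := fscale (fun r z => - (4 / r) * S2 r z)
                   (star (dK0 (fun r z => Zy' r z + U0' r z))) in
  forall r z, KE r z -> 0 < r ->
    dK1 (fscale (fun r _ => r) (star T2)) r z =
    8 * sinU y r z * exp (-2 * U0 r z - 2 * Zy r z)
      * wedge (dK0 Om0') (star (dK0 U0')) r z.
Proof.
  intros profile Sg D0 KE _ _ [HC2 _] HlapU' _ _ _ _ _ HS2 _ HZy' _ T2 r z HK Hr.
  pose proof (exterior_Sigma0_near_axis rho0 z0 muS muN r z profile HK Hr) as Hnear.
  destruct (HS2 r z HK Hr) as [HSr [HSz _]].
  destruct (ex_derive_dZ_plus_dU D0 U0' r z HC2 Hnear y) as [EWr EWz].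
  rewrite (dK1_ext_loc _ (fscale (fun a b => 4 * S2 a b) (fadd (Zform y U0') (dK0 U0')))).
  - rewrite dK1_fscale, (dZ_plus_dU_closed D0 U0' r z HC2 HlapU' Hnear), Rmult_0_r, Rplus_0_r,
      wedge_dK0_scal, (wedge_solves_d _ _ _ _ r z HS2 HK Hr);
      [|exact (ex_derive_scal (fun t => S2 t z) 4 r HSr)
       |exact (ex_derive_scal (fun t => S2 r t) 4 z HSz)|exact EWr|exact EWz].
    unfold Zform. rewrite wedge_dS2_dZ by (apply cosU_sq_plus_sinU_sq, Hr).
    ring.
  - generalize (locally_2d_and _ _ _ _ Hnear (diff2_at_near D0 U0' r z HC2 Hnear)).
    apply locally_2d_mono. intros a b [[HDab Ha] [HUr [HUz _]]].
    destruct (HZy' a b (projK_of_axis _ a b HDab (Rlt_le _ _ Ha)) Ha) as [E1 [E2 [E3 E4]]].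
    exact (rho_star_T2 S2 Zy' U0' (Zform y U0') a b Ha E1 E2 HUr HUz E3 E4).
Qed.
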